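(* Let $n\ge 3$, $\mathbf{X}\in\{0,1\}^{n\times n}$, and let $(i_1,j_1)\neq(i_2,j_2)$ be elements of $\{1,\dots,n\}^2$ with $j_1\le j_2$. Put $i_{\min}=\min(i_1,i_2)$ and $i_{\max}=\max(i_1,i_2)$. Then $\mathbf{X}^{i_1,j_1}=\mathbf{X}^{i_2,j_2}$ if and only if all of the following hold: (1) $X_{i,j}=X_{i,j+1}$ for all $i\in[1,i_{\min}-1]\cup[i_{\max}+1,n]$ and all $j\in[j_1,j_2-1]$; (2) $X_{i,j}=X_{i+1,j}$ for all $i\in[i_{\min},i_{\max}-1]$ and all $j\in[1,j_1-1]\cup[j_2+1,n]$; (3) if $i_1\le i_2$: $X_{i,j}=X_{i+1,j+1}$ for all $i\in[i_{\min},i_{\max}-1]$ and $j\in[j_1,j_2-1]$; if $i_1>i_2$: $X_{i,j}=X_{i+1,j-1}$ for all $i\in[i_{\min},i_{\max}-1]$ and $j\in[j_1+1,j_2]$. (No other entries of $\mathbf{X}$ are constrained.)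
   Context: $X_{i,j}$ is the entry of $\mathbf{X}$ in row $i$, column $j$; $[a,b]=\{a,\dots,b\}$ (empty if $a>b$). $\mathbf{X}^{i,j}\in\{0,1\}^{(n-1)\times(n-1)}$ denotes the array obtained from $\mathbf{X}$ by deleting its $i$-th row and $j$-th column. *)

From mathcomp Require Import all_boot all_order all_algebra.
Set Implicit Arguments. Unset Strict Implicit. Unset Printing Implicit Defensive.

Definition minor (T : Type) (n : nat) (X : 'M[T]_n.+1) (i j : 'I_n.+1) : 'M[T]_n :=
  row' i (col' j X).

From mathcomp Require Import all_boot all_order all_algebra.
From mathcomp Require Import zify.

(* Entry (a, b) of the minor X^{i,j} is X (lift i a) (lift j b), so the two
   minors agree iff X x y = X x' y' for every row pair (x, x') of the form
   (lift i1 a, lift i2 a) and every column pair (y, y') = (lift j1 b, lift j2 b).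
   Such a pair is either diagonal, with x outside [imin, imax], or a pair of
   consecutive indices {k, k+1} with imin <= k < imax.  The diagonal/diagonal
   combination is vacuous and the three others are conditions (1)-(3). *)

Set Implicit Arguments.
Unset Strict Implicit.
Unset Printing Implicit Defensive.

Section PairedEqualities.

Variables (A B C : Type) (f : A -> B -> C).
Variables (Rr : A -> A -> Prop) (Dr : A -> Prop) (Sr : A -> A -> Prop).
Variables (Rc : B -> B -> Prop) (Dc : B -> Prop) (Sc : B -> B -> Prop).
Hypothesis RrE : forall x x', Rr x x' <-> (x = x' /\ Dr x) \/ Sr x x'.
Hypothesis RcE : forall y y', Rc y y' <-> (y = y' /\ Dc y) \/ Sc y y'.

Lemma eq_on_pairs_split :
  (forall x x' y y', Rr x x' -> Rc y y' -> f x y = f x' y') <->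
  [/\ forall x y y', Dr x -> Sc y y' -> f x y = f x y',
      forall x x' y, Sr x x' -> Dc y -> f x y = f x' y
    & forall x x' y y', Sr x x' -> Sc y y' -> f x y = f x' y'].
Proof.
split=> [H | [Hc Hr Hrc] x x' y y' /RrE[[<- Dx] | Sx] /RcE[[<- Dy] | Sy]].
- split=> [x y y' Dx Sy | x x' y Sx Dy | x x' y y' Sx Sy]; apply: H;
    by [apply/RrE; left | apply/RrE; right | apply/RcE; left | apply/RcE; right].
- by [].
- exact: Hc.
- exact: Hr.
- exact: Hrc.
Qed.

End PairedEqualities.

Section LiftPairs.

Variable n : nat.

Definition lift_pair (h h' x x' : 'I_n.+1) : Prop :=
  exists a : 'I_n, lift h a = x /\ lift h' a = x'.

Definition succ_within (lo hi : nat) (x x' : 'I_n.+1) : Prop :=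
  [/\ lo <= x, x < hi & val x' = (val x).+1].

Lemma lift_pair_geP (h h' : 'I_n.+1) : h <= h' -> forall x x',
  lift_pair h' h x x' <-> (x = x' /\ (x < h) || (h' < x)) \/ succ_within h h' x x'.
Proof.
move=> le_hh' x x'; split=> [[a [<- <-]] | hx].
- case: (ltnP a h) => ?; last case: (ltnP a h') => ?.
  + by left; split; [apply: val_inj |]; rewrite /= /bump; lia.
  + by right; split; rewrite /= /bump; lia.
  + by left; split; [apply: val_inj |]; rewrite /= /bump; lia.
- have neq_h'x : h' != x by rewrite -val_eqE /=; case: hx => [[_] | []]; lia.
  have [a def_x _] := unlift_some neq_h'x.
  exists a; split=> //; apply: val_inj; move/(congr1 val): def_x => /=.
  by case: hx => [[<-] | []]; rewrite /bump /=; lia.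
Qed.

Lemma lift_pair_leP (h h' : 'I_n.+1) : h <= h' -> forall x x',
  lift_pair h h' x x' <-> (x = x' /\ (x < h) || (h' < x)) \/ succ_within h h' x' x.
Proof.
move=> le_hh' x x'.
have -> : lift_pair h h' x x' <-> lift_pair h' h x' x by split=> -[a []]; exists a.
rewrite lift_pair_geP //.
by split=> -[[-> Dx] | Sx]; [left | right | left | right].
Qed.

Lemma minor_eq_lift_pairs (T : Type) (X : 'M[T]_n.+1) (i j i' j' : 'I_n.+1) :
  minor X i j = minor X i' j' <->
  forall x x' y y', lift_pair i i' x x' -> lift_pair j j' y y' -> X x y = X x' y'.
Proof.
split=> [eqM x x' y y' [a [<- <-]] [b [<- <-]] | H].
  by have := congr1 (fun M : 'M[T]_n => M a b) eqM; rewrite /minor !mxE.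
by apply/matrixP => a b; rewrite /minor !mxE; apply: H; [exists a | exists b].
Qed.

End LiftPairs.

Theorem lemma3 (n : nat) (hn : 2 <= n) (X : 'M[bool]_n.+1)
    (i1 j1 i2 j2 : 'I_n.+1)
    (hneq : (i1, j1) <> (i2, j2)) (hj : j1 <= j2) :
  let imin := minn i1 i2 in
  let imax := maxn i1 i2 in
  minor X i1 j1 = minor X i2 j2 <->
  [/\ (* (1) *)
      (forall i j j' : 'I_n.+1, (i < imin) || (imax < i) ->
         j1 <= j -> j < j2 -> val j' = (val j).+1 -> X i j = X i j'),
      (* (2) *)
      (forall i i' j : 'I_n.+1, imin <= i -> i < imax -> val i' = (val i).+1 ->
         (j < j1) || (j2 < j) -> X i j = X i' j)
    & (* (3) *)
      (if i1 <= i2 then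
         forall i i' j j' : 'I_n.+1, imin <= i -> i < imax ->
           val i' = (val i).+1 -> j1 <= j -> j < j2 -> val j' = (val j).+1 ->
           X i j = X i' j'
       else
         forall i i' j j' : 'I_n.+1, imin <= i -> i < imax ->
           val i' = (val i).+1 -> j1 < j -> j <= j2 -> val j = (val j').+1 ->
           X i j = X i' j')].
Proof.
cbv zeta; case: (leqP i1 i2) => hi.
- (* Swapping the sides orients the consecutive pairs as (k, k+1), as in (1)-(3). *)
  transitivity (minor X i2 j2 = minor X i1 j1); first by split=> ->.
  rewrite minor_eq_lift_pairs.
  rewrite (eq_on_pairs_split _ (lift_pair_geP hi) (lift_pair_geP hj)).
  split=> -[Hc Hr Hrc]; split.
  + by move=> *; apply: Hc.
  + by move=> *; apply: Hr.
  + by move=> *; apply: Hrc.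
  + by move=> x y y' ? [? ? ?]; apply: Hc.
  + by move=> x x' y [? ? ?] ?; apply: Hr.
  + by move=> x x' y y' [? ? ?] [? ? ?]; apply: Hrc.
- rewrite minor_eq_lift_pairs.
  rewrite (eq_on_pairs_split _ (lift_pair_geP (ltnW hi)) (lift_pair_leP hj)).
  split=> -[Hc Hr Hrc]; split.
  + by move=> *; symmetry; apply: Hc.
  + by move=> *; apply: Hr.
  + move=> i i' j j' ? ? ? ? ? /= def_j; apply: Hrc => //; split=> //; lia.
  + by move=> x y y' ? [? ? ?]; symmetry; apply: Hc.
  + by move=> x x' y [? ? ?] ?; apply: Hr.
  + move=> x x' y y' [? ? ?] [? ? /= def_y]; apply: Hrc => //=; lia.
Qed.
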